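(* In Algorithm 1 (described in the context), for every triplet $(\mathrm{dist},\mathrm{seed},v_0)$ popped from the priority queue $Q$ there is a path from $\mathrm{seed}$ to $v_0$ in $G$ of length $\mathrm{dist}$.
   Context: Algorithm 1 (geodesic $k$ nearest labeled neighbours). Input: an undirected graph $G=(V,E,w)$ with non-negative weights, a set $\mathcal L\subseteq V$ of labeled vertices, and an integer $k\ge1$. It maintains a min-priority queue $Q$ of pairs $(\mathrm{seed},v)\in\mathcal L\times V$ with priorities (a popped pair with priority $\mathrm{dist}$ is called the triplet $(\mathrm{dist},\mathrm{seed},v)$), and for each $v\in V$ a list kNN$[v]$ (initially empty) and a set $S_v$ (initially empty). Initially, for each $s\in\mathcal L$, $(s,s)$ is inserted with priority $0$. While $Q$ is nonempty: pop the pair $(\mathrm{seed},v_0)$ of minimum priority $\mathrm{dist}$; add $\mathrm{seed}$ to $S_{v_0}$; if kNN$[v_0]$ has fewer than $k$ entries, append $(\mathrm{dist},\mathrm{seed})$ to kNN$[v_0]$ and, for every neighbour $v$ of $v_0$ such that kNN$[v]$ has fewer than $k$ entries and $\mathrm{seed}\notin S_v$, perform decrease-or-insert of $(\mathrm{seed},v)$ with priority $\mathrm{dist}+w(v_0,v)$ (if the pair is in $Q$ its priority is lowered to this value when smaller; otherwise it is inserted). *)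

From HB Require Import structures.
From mathcomp Require Import all_boot all_order all_algebra.
Set Implicit Arguments. Unset Strict Implicit. Unset Printing Implicit Defensive.
Import Order.TTheory GRing.Theory Num.Theory.
Local Open Scope ring_scope.

Section Algo.
Variables (V : finType) (R : realDomainType).
(* undirected graph: adjacency relation [e] (assumed symmetric in the theorem)
   and edge weights [w] (assumed symmetric and non-negative on edges). *)
Variables (e : rel V) (w : V -> V -> R) (L : {set V}) (k : nat).

(* State of Algorithm 1.
   [pq s v = Some p]  : the pair (seed s, vertex v) is in Q with priority p;
   [knn v]            : the list kNN[v];
   [sv v]             : the set S_v. *)
Record state := State {
  pq : V -> V -> option R;
  knn : V -> seq (R * V);
  sv : V -> {set V}
}.

Definition init_state : state :=
  State (fun s v => if (s \in L) && (v == s) then Some 0 else None)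
        (fun _ => [::]) (fun _ => set0).

Definition pop_min (st : state) (seed v0 : V) (dist : R) : Prop :=
  pq st seed v0 = Some dist /\
  forall s' v' d', pq st s' v' = Some d' -> dist <= d'.

Definition dec_ins (o : option R) (x : R) : R :=
  if o is Some p then Num.min p x else x.

Definition after_pop (st : state) (seed v0 : V) (dist : R) : state :=
  let Q1 := fun s' v' => if (s' == seed) && (v' == v0) then None else pq st s' v' in
  let S1 := fun x => if x == v0 then seed |: sv st x else sv st x in
  if (size (knn st v0) < k)%N then
    let K1 := fun x => if x == v0 then rcons (knn st x) (dist, seed) else knn st x in
    let Q2 := fun s' v =>
      if [&& s' == seed, e v0 v, (size (K1 v) < k)%N & seed \notin S1 v]
      then Some (dec_ins (Q1 seed v) (dist + w v0 v))
      else Q1 s' v in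
    State Q2 K1 S1
  else State Q1 (knn st) S1.

Inductive reachable : state -> Prop :=
| reach_init : reachable init_state
| reach_step st seed v0 dist :
    reachable st -> pop_min st seed v0 dist ->
    reachable (after_pop st seed v0 dist).

Definition popped (dist : R) (seed v0 : V) : Prop :=
  exists st, reachable st /\ pop_min st seed v0 dist.

End Algo.

Definition walk_len (V : Type) (R : nmodType) (w : V -> V -> R) (x : V) (p : seq V) : R :=
  \sum_(ij <- zip (x :: p) p) w ij.1 ij.2.

(** The invariant is: whenever the pair (s, v) sits in Q with priority d, there
    is a simple path from s to v of length d all of whose vertices other than v
    have already recorded s in their set S_x.  Popping (seed, v0) adds seed to
    S_{v0}, and a pair (seed, v) is only pushed when seed is not in S_v, so
    extending the path of (seed, v0) by the edge v0 v keeps it simple. *)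

From mathcomp Require Import all_boot all_order all_algebra.
Set Implicit Arguments. Unset Strict Implicit. Unset Printing Implicit Defensive.
Import Order.TTheory GRing.Theory Num.Theory.
Local Open Scope ring_scope.

Lemma walk_len_rcons (V : Type) (R : nmodType) (w : V -> V -> R) s p v :
  walk_len w s (rcons p v) = walk_len w s p + w (last s p) v.
Proof.
elim: p s => [|x p IH] s; first by rewrite /walk_len /= big_seq1 big_nil add0r.
by rewrite /walk_len /= !big_cons -/(walk_len w x _) IH addrA.
Qed.

Section SeedPaths.
Variables (V : finType) (R : realDomainType) (e : rel V) (w : V -> V -> R).

Definition seed_path (S : V -> {set V}) (s v : V) (d : R) :=
  exists p : seq V, [/\ path e s p, last s p = v, uniq (s :: p),
     walk_len w s p = d & forall x, x \in belast s p -> s \in S x].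

Lemma seed_path_subset (S S' : V -> {set V}) s v d :
  (forall x, S x \subset S' x) -> seed_path S s v d -> seed_path S' s v d.
Proof.
move=> sub_SS' [p [ep pv up wp Sp]]; exists p; split=> // x /Sp.
exact: (subsetP (sub_SS' x)).
Qed.

Lemma seed_path_extend (S : V -> {set V}) s v0 v d :
  seed_path S s v0 d -> s \in S v0 -> e v0 v -> s \notin S v ->
  seed_path S s v (d + w v0 v).
Proof.
move=> [p [ep pv0 up wp Sp]] Sv0 ev0v Snv.
have S_path x : x \in s :: p -> s \in S x.
  by rewrite lastI mem_rcons inE pv0 => /predU1P [-> | /Sp].
exists (rcons p v); split.
- by rewrite rcons_path ep pv0.
- exact: last_rcons.
- by rewrite -rcons_cons rcons_uniq up andbT; apply: contra Snv => /S_path.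
- by rewrite walk_len_rcons wp pv0.
- by move=> x; rewrite belast_rcons => /S_path.
Qed.

Definition queue_invariant (st : state V R) :=
  forall s v d, pq st s v = Some d -> seed_path (sv st) s v d.

Lemma queue_invariant_init (L : {set V}) : queue_invariant (init_state R L).
Proof.
move=> s v d /=; case: ifP => // /andP [_ /eqP ->] [<-].
by exists [::]; split; rewrite /walk_len ?big_nil.
Qed.

Lemma queue_invariant_after_pop (k : nat) st seed v0 dist :
  queue_invariant st -> pq st seed v0 = Some dist ->
  queue_invariant (after_pop e w k st seed v0 dist).
Proof.
move=> inv_st pq_seed.
set S1 := fun x => if x == v0 then seed |: sv st x else sv st x.
have sub_S1 x : sv st x \subset S1 x by rewrite /S1; case: ifP => // _; apply: subsetUr.
have inv_Q1 s v d :
    (if (s == seed) && (v == v0) then None else pq st s v) = Some d ->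
    seed_path S1 s v d.
  by case: ifP => // _ /inv_st; apply: seed_path_subset.
rewrite /after_pop; case: ifP => _ s v d /=; last exact: inv_Q1.
case: ifP => [/and4P [/eqP -> ev0v _ seed_notin] | _]; last exact: inv_Q1.
have new_path : seed_path S1 seed v (dist + w v0 v).
  apply: seed_path_extend ev0v seed_notin; last by rewrite /S1 eqxx setU11.
  exact: seed_path_subset (inv_st _ _ _ pq_seed).
case Q1v: (if (seed == seed) && (v == v0) then None else pq st seed v) => [p|] /=;
  last by case=> <-.
by rewrite /Num.min; case: ifP => _ [<-] //; apply: inv_Q1.
Qed.

Lemma reachable_queue_invariant (L : {set V}) (k : nat) st :
  reachable e w L k st -> queue_invariant st.
Proof.
elim=> [|{}st seed v0 dist _ inv_st [pq_seed _]]; first exact: queue_invariant_init.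
exact: queue_invariant_after_pop.
Qed.

End SeedPaths.

Theorem lemmaB2 (V : finType) (R : realDomainType) (e : rel V)
    (w : V -> V -> R) (L : {set V}) (k : nat) :
  symmetric e ->
  (forall x y, e x y -> w x y = w y x) ->
  (forall x y, e x y -> 0 <= w x y) ->
  (0 < k)%N ->
  forall (dist : R) (seed v0 : V),
    popped e w L k dist seed v0 ->
    exists p : seq V,
      [/\ path e seed p, last seed p = v0, uniq (seed :: p)
        & walk_len w seed p = dist].
Proof.
move=> _ _ _ _ dist seed v0 [st [reach_st [pq_seed _]]].
have [p [ep pv0 up wp _]] := reachable_queue_invariant reach_st pq_seed.
by exists p.
Qed.
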